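(* Consider the delayed online learning protocol of the context. Let $(U_t)_{t\in\{1,\dots,T\}}$ be a non-decreasing sequence of positive numbers with $U_t\ge L_t$ for all $t$. Fix $r>0$ and $p\in\mathcal X$ with $h(p)\le r^2$. Then running DDA with $\eta_t=r/\sqrt{U_t}$ gives \[R_T(p)\le 2r\sqrt{U_T}.\]
   Context: Let $\mathcal V$ be a finite-dimensional real vector space with norm $\|\cdot\|$ and dual norm $\|\cdot\|_*$, and $\mathcal X\subset\mathcal V$ closed convex. A regularizer $h:\mathcal V\to\mathbb R\cup\{+\infty\}$ is lower semicontinuous, $1$-strongly convex w.r.t. $\|\cdot\|$ on $\mathcal X$, with $\mathcal X\subset\operatorname{dom}h$, whose subdifferential admits a continuous selection, and $h\ge0$. Protocol: at each round $t=1,\dots,T$ one agent $i(t)$ is active, plays $x_t\in\mathcal X$, incurs $f_t(x_t)$ ($f_t$ convex, $\mathcal X\subset\operatorname{dom}\partial f_t$); a subgradient $g_t\in\partial f_t(x_t)$ is revealed later. $\mathcal S^i_t\subset\{1,\dots,t-1\}$: timestamps of subgradients available to agent $i$ at time $t$, nondecreasing in $t$; $\mathcal S_t=\mathcal S^{i(t)}_t$, $\mathcal U_t=\{1,\dots,t-1\}\setminus\mathcal S_t$. DDA: $x_t=\arg\min_{x\in\mathcal X}\{\sum_{s\in\mathcal S_t}\langle g_s,x\rangle+h(x)/\eta_t\}$. Regret: $R_T(p)=\sum_tf_t(x_t)-\sum_tf_t(p)$. Lag: $L_t=\sum_{s=1}^t\big(\|g_s\|_*^2+2\|g_s\|_*\sum_{q\in\mathcal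 U_s}\|g_q\|_*\big)$. *)

From HB Require Import structures.
From mathcomp Require Import all_boot all_order all_algebra.
From mathcomp Require Import all_classical all_reals all_analysis.
Set Implicit Arguments. Unset Strict Implicit. Unset Printing Implicit Defensive.
Import Order.TTheory GRing.Theory Num.Theory.
Import numFieldNormedType.Exports.
Local Open Scope classical_set_scope.
Local Open Scope ring_scope.

Section Defs.
Context {R : realType} {n : nat}.
Local Notation V := 'rV[R]_n.

(* duality pairing <g, x>; the dual space of 'rV_n is identified with 'rV_n *)
Definition dotp (g x : V) : R := \sum_(i < n) g 0 i * x 0 i.

Definition is_norm (N : V -> R) : Prop :=
  [/\ forall x, N x = 0 -> x = 0,
      forall (a : R) x, N (a *: x) = `|a| * N x &
      forall x y, N (x + y) <= N x + N y].

Definition dual_norm (N : V -> R) (g : V) : R :=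
  sup [set dotp g x | x in [set x | N x <= 1]].

Definition convex_efun (f : V -> \bar R) : Prop :=
  forall x y (l : R), 0 < l < 1 ->
    (f (l *: x + (1 - l) *: y)%R <= l%:E * f x + (1 - l)%:E * f y)%E.

Definition subdiff (f : V -> \bar R) (x : V) : set V :=
  [set g | f x \is a fin_num /\ forall y, (f x + (dotp g (y - x)%R)%:E <= f y)%E].

Definition dom_subdiff (f : V -> \bar R) : set V :=
  [set x | exists g, subdiff f x g].

Definition strongly_convex_on (N : V -> R) (X : set V) (h : V -> \bar R) : Prop :=
  forall x y (l : R), X x -> X y -> 0 <= l <= 1 ->
    (h (l *: x + (1 - l) *: y)%R <=
       l%:E * h x + (1 - l)%:E * h y - (l * (1 - l) / 2 * N (x - y) ^+ 2)%:E)%E.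

Definition continuous_subgrad_selection (h : V -> \bar R) : Prop :=
  exists s : V -> V, (forall x, dom_subdiff h x -> subdiff h x (s x)) /\
                     {within dom_subdiff h, continuous s}.

End Defs.

From HB Require Import structures.
From mathcomp Require Import all_boot all_order all_algebra.
From mathcomp Require Import all_classical all_reals all_analysis.
From mathcomp Require Import ring lra zify.
From Stdlib Require Import Lia.

(* Write Psi_t(y) = sum_(s < t) <g_s, y> + kappa_t h(y) for the full-information
   dual-averaging objective, kappa_t = 1 / eta_t, and Phi_t = Psi_t - <C_t, .> for the objective
   that DDA minimizes, C_t being the sum of the subgradients still unavailable at time t.  Both
   are kappa_t-strongly convex, so the minimizer x_t of Phi_t lies within c_t / kappa_t of the
   minimizer of Psi_t, where c_t bounds ||C_t||_*.  Passing from inf Psi_t to inf Psi_(t+1)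
   through x_t therefore loses at most (||g_t||_*^2 / 2 + ||g_t||_* c_t) / kappa_t, and
   telescoping gives R_T(p) <= kappa_T h(p) + sum_t (||g_t||_*^2 / 2 + ||g_t||_* c_t) / kappa_t.
   With kappa_t = sqrt(U_t) / r the first term is at most r sqrt(U_T), and so is the sum, since
   sum_t a_t / sqrt(a_1 + ... + a_t) <= 2 sqrt(a_1 + ... + a_T). *)

Set Implicit Arguments.
Unset Strict Implicit.
Unset Printing Implicit Defensive.
Import Order.TTheory GRing.Theory Num.Theory.
Import numFieldNormedType.Exports.
Local Open Scope classical_set_scope.
Local Open Scope ring_scope.

Section RealFacts.
Variable R : realFieldType.
Implicit Types a c d e M Z : R.

Lemma ge0_of_small_slack M Z :
  (forall e, 0 < e <= 1 -> - (e * M) <= Z) -> 0 <= Z.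
Proof.
move=> slack; apply/ler_addgt0Pr => e e0.
have M1 : 0 < `|M| + 1 by rewrite ltr_pwDr // normr_ge0.
set d := Num.min 1 (e / (`|M| + 1)).
have d0 : 0 < d by rewrite lt_min ltr01 divr_gt0.
have d1 : d <= 1 by rewrite ge_min lexx.
have dM : d * (`|M| + 1) <= e by rewrite -ler_pdivlMr // ge_min lexx orbT.
have := slack d; rewrite d0 d1 => /(_ isT).
have : d * M <= d * `|M| by rewrite ler_pM2l // ler_norm.
nra.
Qed.

Lemma le_quadratic_root a c d e : 0 < a -> 0 <= c -> 0 <= e ->
  a * d ^+ 2 <= c * d + a * e ^+ 2 -> d <= c / a + e.
Proof.
move=> a0 c0 e0 quad; rewrite leNgt; apply/negP => lt_d.
have ca0 : 0 <= c / a by exact: divr_ge0 c0 (ltW a0).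
have ad_gt : a * e < a * d - c.
  have : a * (c / a + e) < a * d by rewrite ltr_pM2l.
  by rewrite mulrDr mulrCA divff ?gt_eqF // mulr1; lra.
have d_gt : e < d by lra.
have : e * (a * d - c) < d * (a * d - c) by rewrite ltr_pM2r //; nra.
have : a * e ^+ 2 <= e * (a * d - c) by rewrite expr2 mulrA (mulrC a) -mulrA ler_wpM2l //; lra.
nra.
Qed.

End RealFacts.

Section SqrtSum.
Variable R : realType.

Lemma sqrt_increment (S a u : R) : 0 <= S -> 0 <= a -> S + a <= u ->
  2 * Num.sqrt S + a / Num.sqrt u <= 2 * Num.sqrt (S + a).
Proof.
move=> S0 a0 Su.
have [->|a_neq0] := eqVneq a 0; first by rewrite mul0r !addr0.
have a_gt0 : 0 < a by rewrite lt_def a_neq0.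
set s := Num.sqrt S; set s' := Num.sqrt (S + a).
have s0 : 0 <= s by exact: sqrtr_ge0.
have s'0 : 0 < s' by rewrite sqrtr_gt0; lra.
have ss : s ^+ 2 = S by rewrite sqr_sqrtr.
have ss' : s' ^+ 2 = S + a by rewrite sqr_sqrtr //; lra.
have le_u : a / Num.sqrt u <= a / s'.
  rewrite ler_wpM2l // lef_pV2 ?posrE ?ler_sqrt //; try lra.
  by rewrite sqrtr_gt0; lra.
suff : a / s' <= 2 * (s' - s) by lra.
rewrite ler_pdivrMr //; have := sqr_ge0 (s' - s); nra.
Qed.

Lemma sum_div_sqrt_le (a u : nat -> R) (T : nat) :
  (forall t, (1 <= t <= T)%N -> 0 <= a t) ->
  (forall t, (1 <= t <= T)%N -> \sum_(1 <= s < t.+1) a s <= u t) ->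
  \sum_(1 <= t < T.+1) a t / Num.sqrt (u t) <= 2 * Num.sqrt (\sum_(1 <= t < T.+1) a t).
Proof.
elim: T => [|T IH] a_ge0 a_le_u; first by rewrite !big_geq // sqrtr0 mulr0.
rewrite big_nat_recr //= [X in _ <= 2 * Num.sqrt X]big_nat_recr //=.
have IH' := IH (fun t tT => a_ge0 t (ltac:(lia))) (fun t tT => a_le_u t (ltac:(lia))).
apply: le_trans (lerD IH' (lexx _)) _; apply: sqrt_increment.
- by rewrite big_nat_cond sumr_ge0 // => t /andP[tT _]; apply: a_ge0; lia.
- by apply: a_ge0; lia.
- by rewrite -big_nat_recr //=; apply: a_le_u; lia.
Qed.

End SqrtSum.

Section Dotp.
Variables (R : realType) (n : nat).
Implicit Types g u v : 'rV[R]_n.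

Lemma dotpDr g u v : dotp g (u + v) = dotp g u + dotp g v.
Proof. by rewrite /dotp -big_split; apply: eq_bigr => j _; rewrite mxE mulrDr. Qed.

Lemma dotpZr g a v : dotp g (a *: v) = a * dotp g v.
Proof. by rewrite /dotp mulr_sumr; apply: eq_bigr => j _; rewrite mxE mulrCA. Qed.

Lemma dotp0r g : dotp g 0 = 0.
Proof. by rewrite -(scale0r 0) dotpZr mul0r. Qed.

Lemma dotpNr g v : dotp g (- v) = - dotp g v.
Proof. by rewrite -scaleN1r dotpZr mulN1r. Qed.

Lemma dotpBr g u v : dotp g (u - v) = dotp g u - dotp g v.
Proof. by rewrite dotpDr dotpNr. Qed.

Lemma dotp_suml (I : Type) (r : seq I) (P : pred I) (F : I -> 'rV[R]_n) v :
  dotp (\sum_(i <- r | P i) F i) v = \sum_(i <- r | P i) dotp (F i) v.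
Proof.
apply: (big_morph (dotp^~ v)) => [g u|]; rewrite /dotp.
  by rewrite -big_split; apply: eq_bigr => j _; rewrite mxE mulrDl.
by rewrite big1 // => j _; rewrite mxE mul0r.
Qed.

Lemma coord_le_mx_norm v j : `|v 0 j| <= `|v|.
Proof.
rewrite [leRHS]/Num.Def.normr /= mx_normrE.
exact: (le_bigmax _ (fun ij : 'I_1 * 'I_n => `|v ij.1 ij.2|) (0, j)).
Qed.

Lemma dotp_le_mx_norm g v : `|dotp g v| <= (\sum_(j < n) `|g 0 j|) * `|v|.
Proof.
rewrite /dotp mulr_suml; apply: le_trans (ler_norm_sum _ _ _) _.
by apply: ler_sum => j _; rewrite normrM ler_wpM2l ?coord_le_mx_norm.
Qed.

End Dotp.

Section Norm.
Variables (R : realType) (n : nat) (N : 'rV[R]_n -> R).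
Hypothesis N_norm : is_norm N.
Local Notation V := 'rV[R]_n.
Implicit Types g u v : V.

Lemma N_eq0 v : N v = 0 -> v = 0.
Proof. by case: N_norm => definite _ _; exact: definite. Qed.

Lemma NZ a v : N (a *: v) = `|a| * N v.
Proof. by case: N_norm => _ homogeneous _; exact: homogeneous. Qed.

Lemma N_triangle u v : N (u + v) <= N u + N v.
Proof. by case: N_norm => _ _ subadditive; exact: subadditive. Qed.

Lemma N0 : N 0 = 0.
Proof. by rewrite -(scale0r (0 : V)) NZ normr0 mul0r. Qed.

Lemma NN v : N (- v) = N v.
Proof. by rewrite -scaleN1r NZ normrN1 mul1r. Qed.

Lemma N_ge0 v : 0 <= N v.
Proof. by have := N_triangle v (- v); rewrite subrr N0 NN; lra. Qed.

Lemma N_distC u v : N (u - v) = N (v - u).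
Proof. by rewrite -NN opprB. Qed.

Lemma N_sum (I : finType) (F : I -> V) : N (\sum_i F i) <= \sum_i N (F i).
Proof.
apply: (big_ind2 (fun u b => N u <= b)) => [|u a v b ua vb|//]; first by rewrite N0.
exact: le_trans (N_triangle u v) (lerD ua vb).
Qed.

Let K := \sum_(j < n) N 'e_j.

Lemma N_le_mx_norm v : N v <= K * `|v|.
Proof.
rewrite [v in N v]row_sum_delta /K mulr_suml; apply: le_trans (N_sum _) _.
by apply: ler_sum => j _; rewrite NZ mulrC ler_wpM2l ?N_ge0 ?coord_le_mx_norm.
Qed.

Lemma N_continuous : continuous N.
Proof.
have K1 : 0 < K + 1 by rewrite ltr_pwDr // sumr_ge0 // => j _; exact: N_ge0.
move=> u; apply/(@cvgrPdist_lt _ _ _ _ (nbhs_filter u)) => e e0.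
have d0 : 0 < e / (K + 1) by rewrite divr_gt0.
near=> v.
have uv : `|u - v| < e / (K + 1).
  by near: v; exact: (@nbhs_ball_norm _ _ u (PosNum d0)).
have Nuv : N (u - v) <= K * `|u - v| by exact: N_le_mx_norm.
have Kuv : K * `|u - v| < e.
  rewrite ltr_pdivlMr // in uv; apply: le_lt_trans uv.
  by rewrite [leRHS]mulrC ler_wpM2r ?normr_ge0 // lerDl.
have := N_triangle (u - v) v; have := N_triangle (v - u) u.
rewrite !subrK N_distC ltr_norml; lra.
Unshelve. all: by end_near.
Qed.

Lemma mx_norm_le_N : exists2 c, 0 < c & forall v, c * `|v| <= N v.
Proof.
have normalize v : v != 0 -> `|(`|v|^-1 *: v)| = 1.
  by move=> v0; rewrite normrZ normrV ?unitfE ?normr_eq0 // normr_id mulVf ?normr_eq0.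
have [[u u1]|no_unit] := pselect (exists u : V, `|u| = 1); last first.
  exists 1 => // v; have [->|v0] := eqVneq v 0; first by rewrite normr0 mulr0 N_ge0.
  by exfalso; apply: no_unit; exists (`|v|^-1 *: v); exact: normalize.
pose S := [set v : V | `|v| = 1].
have S_compact : compact S.
  apply: bounded_closed_compact.
    rewrite /= /bounded_near. near=> M => v /= ->. near: M. exact: nbhs_pinfty_ge.
  have -> : S = Num.Def.normr @^-1` [set 1] by [].
  by move/continuous_closedP: (@norm_continuous _ V); apply; exact: closed_eq.
have [c Sc c_min] := EVT_min_rV (ex_intro _ u u1) S_compact
  (continuous_subspaceT N_continuous).
have Nc : 0 < N c.
  rewrite lt_def N_ge0 andbT; apply/eqP => /N_eq0 c0.
  by move: Sc; rewrite inE /S /= c0 normr0 => /esym/eqP; rewrite oner_eq0.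
exists (N c) => // v; have [->|v0] := eqVneq v 0; first by rewrite normr0 mulr0 N_ge0.
have := c_min (`|v|^-1 *: v); rewrite inE /S /= normalize // => /(_ erefl).
by rewrite NZ normrV ?unitfE ?normr_eq0 // normr_id ler_pdivlMl ?normr_gt0 // mulrC.
Unshelve. all: by end_near.
Qed.

Let dual_set g := [set dotp g v | v in [set v | N v <= 1]].

Lemma has_sup_dual g : has_sup (dual_set g).
Proof.
split; first by exists (dotp g 0), 0; rewrite //= N0.
have [c c0 c_le] := mx_norm_le_N.
exists ((\sum_(j < n) `|g 0 j|) / c) => _ [v /= Nv <-].
apply: le_trans (ler_norm _) _; apply: le_trans (dotp_le_mx_norm g v) _.
rewrite ler_pdivlMr // -mulrA -[leRHS]mulr1 ler_wpM2l ?sumr_ge0 // mulrC.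
by apply: le_trans (c_le v) _.
Qed.

Lemma dual_norm_ge0 g : 0 <= dual_norm N g.
Proof. by apply: (sup_upper_bound (has_sup_dual g)); exists 0; rewrite /= ?N0 ?dotp0r. Qed.

Lemma dotp_le_dual_norm g v : dotp g v <= dual_norm N g * N v.
Proof.
have [Nv0|Nv_neq0] := eqVneq (N v) 0; first by rewrite Nv0 (N_eq0 Nv0) dotp0r mulr0.
have Nv : 0 < N v by rewrite lt_def Nv_neq0 N_ge0.
rewrite -ler_pdivrMr // mulrC -dotpZr.
apply: (sup_upper_bound (has_sup_dual g)); exists ((N v)^-1 *: v) => //=.
by rewrite NZ ger0_norm ?invr_ge0 ?N_ge0 // mulVf.
Qed.

Lemma dotp_ge_dual_norm g v : - (dual_norm N g * N v) <= dotp g v.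
Proof. by rewrite lerNl -dotpNr -(NN v) dotp_le_dual_norm. Qed.

End Norm.

Definition strongly_convex_mod (R : realType) (n : nat) (N : 'rV[R]_n -> R)
    (X : set 'rV[R]_n) (k : R) (F : 'rV[R]_n -> R) :=
  forall y z l, X y -> X z -> 0 <= l <= 1 ->
    F (l *: y + (1 - l) *: z) <=
      l * F y + (1 - l) * F z - l * (1 - l) * k / 2 * N (y - z) ^+ 2.

Lemma convex_set_comb (R : realType) (n : nat) (X : set 'rV[R]_n) y z l :
  convex_set X -> X y -> X z -> 0 <= l <= 1 -> X (l *: y + (1 - l) *: z).
Proof.
move=> X_convex Xy Xz /andP[l0 l1].
by have := X_convex y z (Itv01 l0 l1); rewrite !inE; apply.
Qed.

Section StrongConvexity.
Variables (R : realType) (n : nat) (N : 'rV[R]_n -> R) (X : set 'rV[R]_n).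
Hypothesis X_convex : convex_set X.
Local Notation V := 'rV[R]_n.

Lemma strongly_convex_modZ (k : R) (F : V -> R) :
  0 <= k -> strongly_convex_mod N X 1 F -> strongly_convex_mod N X k (fun v => k * F v).
Proof. by move=> k0 F_sc y z l Xy Xz l01; have := ler_wpM2l k0 (F_sc y z l Xy Xz l01); nra. Qed.

Lemma strongly_convex_mod_dotp (k : R) (F : V -> R) (a : V) :
  strongly_convex_mod N X k F -> strongly_convex_mod N X k (fun v => dotp a v + F v).
Proof.
move=> F_sc y z l Xy Xz l01; have := F_sc y z l Xy Xz l01.
by rewrite dotpDr !dotpZr; lra.
Qed.

Lemma strongly_convex_near_min (k : R) (F : V -> R) m z w l :
  strongly_convex_mod N X k F -> (forall v, X v -> m <= F v) ->
  X z -> X w -> 0 <= l <= 1 ->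
  l * ((1 - l) * k / 2 * N (w - z) ^+ 2) <= l * (F w - m) + (F z - m).
Proof.
move=> F_sc m_lb Xz Xw l01; have /andP[l0 _] := l01.
have := m_lb _ (convex_set_comb X_convex Xw Xz l01).
have := F_sc w z l Xw Xz l01.
have : 0 <= l * (F z - m) by rewrite mulr_ge0 // subr_ge0 m_lb.
nra.
Qed.

End StrongConvexity.

Section PerturbedMinimizer.
Variables (R : realType) (n : nat) (N : 'rV[R]_n -> R) (X : set 'rV[R]_n).
Hypotheses (N_norm : is_norm N) (X_convex : convex_set X).
Local Notation V := 'rV[R]_n.
Variables (k : R) (Phi : V -> R) (C : V) (c : R) (x : V).
Hypotheses (k_gt0 : 0 < k) (Phi_sc : strongly_convex_mod N X k Phi).
Hypotheses (c_ge0 : 0 <= c) (C_le : forall v, dotp C v <= c * N v).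
Hypotheses (Xx : X x) (x_min : forall v, X v -> Phi x <= Phi v).

Local Notation Psi v := (Phi v + dotp C v).

Let Psi_sc : strongly_convex_mod N X k (fun v => Psi v).
Proof.
move=> y z l Xy Xz l01; have := strongly_convex_mod_dotp C Phi_sc Xy Xz l01.
by rewrite !(addrC (dotp C _)).
Qed.

Lemma gap_near_min m g y z l e :
  (forall v, X v -> m <= Psi v) -> X y -> X z -> 0 < l < 1 -> 0 <= e ->
  Psi z - m <= l * ((1 - l) * k * e ^+ 2 / 2) ->
  - ((dual_norm N g ^+ 2 / 2 + dual_norm N g * c) / ((1 - l) * k))
    - e * ((1 - l) * k * e / 2 + dual_norm N g)
  <= Psi y - m + (dotp g y - dotp g x).
Proof.
move=> m_lb Xy Xz /andP[l0 l1] e0 z_near.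
have l01 : 0 <= l <= 1 by rewrite (ltW l0) (ltW l1).
set a := (1 - l) * k; set gam := dual_norm N g.
have a0 : 0 < a by rewrite mulr_gt0 // subr_gt0.
have gam0 : 0 <= gam := dual_norm_ge0 N_norm g.
set D := N (y - z); set d := N (x - z).
have D0 : 0 <= D := N_ge0 N_norm _.
have d0 : 0 <= d := N_ge0 N_norm _.
have growth_y : a / 2 * D ^+ 2 <= Psi y - m + a * e ^+ 2 / 2.
  have := strongly_convex_near_min X_convex Psi_sc m_lb Xz Xy l01.
  rewrite -/D => growth.
  by rewrite -(ler_pM2l l0) /a; lra.
have d_le : d <= c / a + e.
  apply: le_quadratic_root => //.
  have := strongly_convex_near_min X_convex Psi_sc m_lb Xz Xx l01.
  have := strongly_convex_near_min X_convex Phi_sc x_min Xx Xz l01.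
  have := C_le (x - z).
  rewrite [N (z - x)]N_distC // subrr addr0 dotpBr -/d => Cxz growth_Phi growth_Psi.
  have := ler_wpM2l (ltW l0) Cxz.
  have : (1 + l) * (Psi z - m) <= 2 * (Psi z - m).
    by rewrite ler_wpM2r ?subr_ge0 ?m_lb //; lra.
  move=> slack_z slack_C.
  by rewrite -(ler_pM2l l0) /a; lra.
have gap_g : - (gam * D) - gam * d <= dotp g y - dotp g x.
  have -> : dotp g y - dotp g x = dotp g (y - z) + dotp g (z - x) by rewrite !dotpBr; ring.
  by apply: lerD; rewrite ?/d 1?(N_distC N_norm x) dotp_ge_dual_norm.
have amgm : - (gam ^+ 2 / (2 * a)) <= a / 2 * D ^+ 2 - gam * D.
  have a2 : 0 < 2 * a by rewrite mulr_gt0.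
  have := divr_ge0 (sqr_ge0 (a * D - gam)) (ltW a2).
  have -> : (a * D - gam) ^+ 2 / (2 * a) = a / 2 * D ^+ 2 - gam * D + gam ^+ 2 / (2 * a).
    by field; rewrite gt_eqF.
  lra.
have -> : (gam ^+ 2 / 2 + gam * c) / a = gam ^+ 2 / (2 * a) + gam * (c / a).
  by field; rewrite gt_eqF.
have := ler_wpM2l gam0 d_le.
nra.
Qed.

Let inf_Psi := inf [set Psi v | v in X].

Let has_inf_Psi m : (forall v, X v -> m <= Psi v) ->
  nonempty [set Psi v | v in X] /\ has_lbound [set Psi v | v in X].
Proof. by move=> m_lb; split; [exists (Psi x), x | exists m => _ [v Xv <-]; exact: m_lb]. Qed.

Lemma gap_inf m g y l :
  (forall v, X v -> m <= Psi v) -> X y -> 0 < l < 1 ->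
  - ((dual_norm N g ^+ 2 / 2 + dual_norm N g * c) / ((1 - l) * k))
  <= Psi y - inf_Psi + (dotp g y - dotp g x).
Proof.
move=> m_lb Xy l01; have /andP[l0 l1] := l01.
have inf_lb v : X v -> inf_Psi <= Psi v.
  by move=> Xv; apply: (ge_inf (has_inf_Psi m_lb).2); exists v.
set a := (1 - l) * k; set gam := dual_norm N g.
have a0 : 0 < a by rewrite mulr_gt0 // subr_gt0.
suff : 0 <= Psi y - inf_Psi + (dotp g y - dotp g x) + (gam ^+ 2 / 2 + gam * c) / a by lra.
apply: (@ge0_of_small_slack _ (a / 2 + gam)) => e /andP[e0 e1].
have eps0 : 0 < l * (a * e ^+ 2 / 2).
  by apply: mulr_gt0 => //; apply: divr_gt0 => //; apply: mulr_gt0 => //; exact: exprn_gt0.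
have [_ [z Xz <-] z_near] := inf_adherent eps0 (has_inf_Psi m_lb).
have z_gap : Psi z - inf_Psi <= l * (a * e ^+ 2 / 2) by rewrite /inf_Psi; lra.
have := gap_near_min g inf_lb Xy Xz l01 (ltW e0) z_gap; rewrite -/a -/gam.
have : e * (a * e / 2) <= e * (a / 2).
  apply: ler_wpM2l; first exact: ltW.
  by rewrite ler_pM2r ?invr_gt0 //; exact: ler_piMr (ltW a0) e1.
lra.
Qed.

Lemma perturbed_min_step m g y :
  (forall v, X v -> m <= Psi v) -> X y ->
  m + dotp g x - (dual_norm N g ^+ 2 / 2 + dual_norm N g * c) / k <= Psi y + dotp g y.
Proof.
move=> m_lb Xy; set gam := dual_norm N g; set E := gam ^+ 2 / 2 + gam * c.
have E0 : 0 <= E by rewrite addr_ge0 ?mulr_ge0 ?divr_ge0 ?sqr_ge0 ?dual_norm_ge0.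
have Ek0 : 0 <= E / k := divr_ge0 E0 (ltW k_gt0).
have m_inf : m <= inf_Psi.
  by apply: (lb_le_inf (has_inf_Psi m_lb).1) => _ [v Xv <-]; exact: m_lb.
suff : 0 <= Psi y - inf_Psi + (dotp g y - dotp g x) + E / k by lra.
apply: (@ge0_of_small_slack _ (E / k)) => e /andP[e0 e1].
have l01 : 0 < e / 2 < 1 by apply/andP; split; lra.
have := gap_inf g m_lb Xy l01; rewrite -/gam -/E.
have : E / ((1 - e / 2) * k) <= E / k * (1 + e).
  have -> : E / ((1 - e / 2) * k) = E / k / (1 - e / 2) by field; rewrite !gt_eqF //; lra.
  have : 0 <= E / k * (e * (1 - e)) by apply: mulr_ge0 => //; apply: mulr_ge0; lra.
  by rewrite ler_pdivrMr; nra.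
lra.
Qed.

End PerturbedMinimizer.

Section DelayedDualAveraging.
Variables (R : realType) (n : nat) (N : 'rV[R]_n -> R) (X : set 'rV[R]_n).
Hypotheses (N_norm : is_norm N) (X_convex : convex_set X).
Local Notation V := 'rV[R]_n.
Variable hr : V -> R.
Hypotheses (hr_sc : strongly_convex_mod N X 1 hr) (hr_ge0 : forall y, X y -> 0 <= hr y).
Variables (T : nat) (avail : nat -> pred nat) (g x : nat -> V) (kappa : nat -> R).
Hypothesis kappa_gt0 : forall t, (1 <= t <= T)%N -> 0 < kappa t.
Hypothesis kappa_homo : forall t, (1 <= t < T)%N -> kappa t <= kappa t.+1.
Hypothesis x_dda : forall t, (1 <= t <= T)%N -> X (x t) /\ forall y, X y ->
  \sum_(1 <= s < t | avail t s) dotp (g s) (x t) + kappa t * hr (x t)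
    <= \sum_(1 <= s < t | avail t s) dotp (g s) y + kappa t * hr y.

Definition missed_mass t := \sum_(1 <= q < t | ~~ avail t q) dual_norm N (g q).

Definition dda_error t :=
  (dual_norm N (g t) ^+ 2 / 2 + dual_norm N (g t) * missed_mass t) / kappa t.

Lemma dda_step t : (1 <= t <= T)%N ->
  (forall y, X y -> \sum_(1 <= s < t) (dotp (g s) (x s) - dda_error s)
                    <= \sum_(1 <= s < t) dotp (g s) y + kappa t * hr y) ->
  forall y, X y -> \sum_(1 <= s < t.+1) (dotp (g s) (x s) - dda_error s)
                   <= \sum_(1 <= s < t.+1) dotp (g s) y + kappa t * hr y.
Proof.
move=> tT potential y Xy; have [Xxt x_min] := x_dda tT.
have t0 : (0 < t)%N by case/andP: tT.
pose seen := \sum_(1 <= s < t | avail t s) g s.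
pose unseen := \sum_(1 <= s < t | ~~ avail t s) g s.
have split_sum v : \sum_(1 <= s < t) dotp (g s) v = dotp seen v + dotp unseen v.
  by rewrite !dotp_suml (bigID (avail t)).
have Phi_sc : strongly_convex_mod N X (kappa t) (fun v => dotp seen v + kappa t * hr v).
  by apply/strongly_convex_mod_dotp/strongly_convex_modZ => //; exact/ltW/kappa_gt0.
have unseen_le v : dotp unseen v <= missed_mass t * N v.
  by rewrite dotp_suml /missed_mass mulr_suml ler_sum // => s _; exact: dotp_le_dual_norm.
have missed_ge0 : 0 <= missed_mass t.
  by apply: sumr_ge0 => s _; exact: dual_norm_ge0.
have seen_min v : X v -> dotp seen (x t) + kappa t * hr (x t) <= dotp seen v + kappa t * hr v.
  by rewrite !dotp_suml; exact: x_min.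
have potential_split v : X v -> \sum_(1 <= s < t) (dotp (g s) (x s) - dda_error s)
    <= dotp seen v + kappa t * hr v + dotp unseen v.
  by move=> Xv; rewrite addrAC -split_sum; exact: potential.
have := perturbed_min_step N_norm X_convex (kappa_gt0 tT) Phi_sc missed_ge0 unseen_le Xxt
  seen_min (g t) potential_split Xy.
rewrite !big_nat_recr //= split_sum /dda_error; lra.
Qed.

Lemma dda_potential t : (1 <= t <= T)%N -> forall y, X y ->
  \sum_(1 <= s < t.+1) (dotp (g s) (x s) - dda_error s)
    <= \sum_(1 <= s < t.+1) dotp (g s) y + kappa t * hr y.
Proof.
elim: t => [//|t IH] tT; apply: dda_step => // y Xy.
have [t0|t_gt0] := posnP t.
  subst t; rewrite !big_geq // add0r.
  exact: mulr_ge0 (ltW (kappa_gt0 tT)) (hr_ge0 Xy).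
apply: le_trans (IH _ y Xy) _; first by rewrite t_gt0 ltnW.
by rewrite lerD2l ler_wpM2r ?hr_ge0 // kappa_homo // t_gt0.
Qed.

Lemma dda_linear_regret p : (0 < T)%N -> X p ->
  \sum_(1 <= t < T.+1) (dotp (g t) (x t) - dotp (g t) p)
    <= kappa T * hr p + \sum_(1 <= t < T.+1) dda_error t.
Proof.
move=> T0 Xp; have := @dda_potential T; rewrite T0 leqnn => /(_ isT p Xp).
rewrite !sumrB; lra.
Qed.

End DelayedDualAveraging.

Lemma strongly_convex_on_fine (R : realType) (n : nat) (N : 'rV[R]_n -> R)
    (X : set 'rV[R]_n) (h : 'rV[R]_n -> \bar R) :
  convex_set X -> (forall y, X y -> h y \is a fin_num) ->
  strongly_convex_on N X h -> strongly_convex_mod N X 1 (fun y => fine (h y)).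
Proof.
move=> X_convex h_fin h_sc y z l Xy Xz l01.
have Xyz := convex_set_comb X_convex Xy Xz l01.
have := h_sc y z l Xy Xz l01.
rewrite -(fineK (h_fin _ Xy)) -(fineK (h_fin _ Xz)) -(fineK (h_fin _ Xyz)) /=.
by rewrite -!EFinM -!EFinD lee_fin mulr1.
Qed.

Lemma sum_subgrad_le (R : realType) (n : nat) (f : nat -> 'rV[R]_n -> \bar R)
    (x g : nat -> 'rV[R]_n) (p : 'rV[R]_n) (T : nat) :
  (forall t, (1 <= t <= T)%N -> subdiff (f t) (x t) (g t)) ->
  (forall t, (1 <= t <= T)%N -> dom_subdiff (f t) p) ->
  (\sum_(1 <= t < T.+1) f t (x t) - \sum_(1 <= t < T.+1) f t p
    <= (\sum_(1 <= t < T.+1) (dotp (g t) (x t) - dotp (g t) p))%:E)%E.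
Proof.
move=> g_sub p_dom.
have fxE t : (1 <= t < T.+1)%N -> f t (x t) = (fine (f t (x t)))%:E.
  by move=> tT; have [fx_fin _] := g_sub t tT; rewrite fineK.
have fpE t : (1 <= t < T.+1)%N -> f t p = (fine (f t p))%:E.
  by move=> tT; have [gp [fp_fin _]] := p_dom t tT; rewrite fineK.
rewrite (eq_big_nat _ _ fxE) (eq_big_nat _ _ fpE) !sumEFin -EFinB lee_fin -sumrB.
apply: ler_sum_nat => t tT; have [_ subgrad] := g_sub t tT.
by have := subgrad p; rewrite (fxE t tT) (fpE t tT) -EFinD lee_fin dotpBr; lra.
Qed.

Lemma dda_error_sum_le (R : realType) (n : nat) (N : 'rV[R]_n -> R)
    (avail : nat -> pred nat) (g : nat -> 'rV[R]_n) (U : nat -> R) (r : R) (T : nat) :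
  is_norm N -> 0 < r -> (forall t, (1 <= t <= T)%N -> 0 < U t) ->
  (forall t, (1 <= t <= T)%N ->
     \sum_(1 <= s < t.+1) (dual_norm N (g s) ^+ 2
                            + 2 * dual_norm N (g s) * missed_mass N avail g s) <= U t) ->
  \sum_(1 <= t < T.+1) dda_error N avail g (fun t => (r / Num.sqrt (U t))^-1) t
    <= r * Num.sqrt (U T).
Proof.
move=> N_norm r_gt0 U_gt0 U_lag.
pose a s := dual_norm N (g s) ^+ 2 + 2 * dual_norm N (g s) * missed_mass N avail g s.
have a_ge0 t : (1 <= t <= T)%N -> 0 <= a t.
  move=> _; rewrite addr_ge0 ?sqr_ge0 // !mulr_ge0 ?dual_norm_ge0 //.
  by apply: sumr_ge0 => s _; exact: dual_norm_ge0.
have errE t : (1 <= t < T.+1)%N ->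
    dda_error N avail g (fun t => (r / Num.sqrt (U t))^-1) t = r / 2 * (a t / Num.sqrt (U t)).
  move=> tT; have sqrtU : 0 < Num.sqrt (U t) by rewrite sqrtr_gt0 U_gt0.
  by rewrite /dda_error /a; field; rewrite !gt_eqF.
rewrite (eq_big_nat _ _ errE) -mulr_sumr.
have [->|T_gt0] := posnP T.
  by rewrite big_geq // mulr0; exact: mulr_ge0 (ltW r_gt0) (sqrtr_ge0 _).
apply: le_trans (ler_wpM2l _ (sum_div_sqrt_le a_ge0 U_lag)) _.
  exact: divr_ge0 (ltW r_gt0) (ler0n _ 2).
have T_range : (1 <= T <= T)%N by rewrite T_gt0 leqnn.
have -> : r / 2 * (2 * Num.sqrt (\sum_(1 <= t < T.+1) a t)) = r * Num.sqrt (\sum_(1 <= t < T.+1) a t).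
  by field.
apply: ler_wpM2l; first exact: ltW.
by rewrite ler_sqrt ?U_lag //; apply/ltW/U_gt0.
Qed.

Lemma dda_regret_sqrt_steps (R : realType) (n : nat) (N : 'rV[R]_n -> R)
    (X : set 'rV[R]_n) (hr : 'rV[R]_n -> R) (T : nat) (avail : nat -> pred nat)
    (x g : nat -> 'rV[R]_n) (U : nat -> R) (r : R) (p : 'rV[R]_n) :
  is_norm N -> convex_set X -> strongly_convex_mod N X 1 hr ->
  (forall y, X y -> 0 <= hr y) ->
  (forall t, (1 <= t <= T)%N -> 0 < U t) ->
  (forall t t', (1 <= t)%N -> (t <= t')%N -> (t' <= T)%N -> U t <= U t') ->
  (forall t, (1 <= t <= T)%N ->
     \sum_(1 <= s < t.+1) (dual_norm N (g s) ^+ 2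
                            + 2 * dual_norm N (g s) * missed_mass N avail g s) <= U t) ->
  0 < r -> X p -> hr p <= r ^+ 2 ->
  (forall t, (1 <= t <= T)%N -> X (x t) /\ forall y, X y ->
     \sum_(1 <= s < t | avail t s) dotp (g s) (x t) + (r / Num.sqrt (U t))^-1 * hr (x t)
       <= \sum_(1 <= s < t | avail t s) dotp (g s) y + (r / Num.sqrt (U t))^-1 * hr y) ->
  \sum_(1 <= t < T.+1) (dotp (g t) (x t) - dotp (g t) p) <= 2 * r * Num.sqrt (U T).
Proof.
move=> N_norm X_convex hr_sc hr_ge0 U_gt0 U_homo U_lag r_gt0 Xp hrp x_dda.
have [->|T_gt0] := posnP T.
  by rewrite big_geq //; apply: mulr_ge0 (sqrtr_ge0 _); rewrite mulr_ge0 // ltW.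
pose kappa t := (r / Num.sqrt (U t))^-1.
have kappaE t : kappa t = Num.sqrt (U t) / r by rewrite /kappa invf_div.
have kappa_gt0 t : (1 <= t <= T)%N -> 0 < kappa t.
  by move=> tT; rewrite kappaE divr_gt0 // sqrtr_gt0 U_gt0.
have kappa_homo t : (1 <= t < T)%N -> kappa t <= kappa t.+1.
  move=> /andP[t1 tT]; rewrite !kappaE ler_pM2r ?invr_gt0 // ler_sqrt.
    by apply: U_homo.
  by apply/ltW/U_gt0; rewrite tT andbT.
apply: le_trans (dda_linear_regret N_norm X_convex hr_sc hr_ge0 kappa_gt0 kappa_homo
  x_dda T_gt0 Xp) _.
have reg_le : kappa T * hr p <= r * Num.sqrt (U T).
  rewrite kappaE; apply: le_trans (ler_wpM2l (divr_ge0 (sqrtr_ge0 _) (ltW r_gt0)) hrp) _.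
  by rewrite expr2 mulrA divfK ?gt_eqF // mulrC.
have err_le := dda_error_sum_le N_norm r_gt0 U_gt0 U_lag.
by apply: le_trans (lerD reg_le err_le) _; lra.
Qed.

Theorem lemma5 (R : realType) (n : nat)
  (N : 'rV[R]_n -> R) (X : set 'rV[R]_n) (h : 'rV[R]_n -> \bar R)
  (T : nat) (I : Type) (i : nat -> I) (Av : I -> nat -> pred nat)
  (f : nat -> 'rV[R]_n -> \bar R) (x g : nat -> 'rV[R]_n)
  (U : nat -> R) (r : R) (p : 'rV[R]_n) :
  is_norm N ->
  closed X -> convex_set X ->
  lower_semicontinuous h ->
  strongly_convex_on N X h ->
  (forall y, X y -> (h y < +oo)%E) ->
  continuous_subgrad_selection h ->
  (forall y, (0 <= h y)%E) ->
  (* losses *)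
  (forall t, (1 <= t <= T)%N -> convex_efun (f t)) ->
  (forall t y, (1 <= t <= T)%N -> f t y <> -oo%E) ->
  (forall t y, (1 <= t <= T)%N -> X y -> dom_subdiff (f t) y) ->
  (* availability sets: S^j_t ⊆ {1,...,t-1}, nondecreasing in t *)
  (forall j t s, (1 <= t <= T)%N -> Av j t s -> (1 <= s < t)%N) ->
  (forall j t t' s, (1 <= t)%N -> (t <= t')%N -> (t' <= T)%N ->
     Av j t s -> Av j t' s) ->
  (* step sizes / lag bounds *)
  (forall t, (1 <= t <= T)%N -> 0 < U t) ->
  (forall t t', (1 <= t)%N -> (t <= t')%N -> (t' <= T)%N -> U t <= U t') ->
  (forall t, (1 <= t <= T)%N ->
     \sum_(1 <= s < t.+1)
        (dual_norm N (g s) ^+ 2 +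
         2 * dual_norm N (g s) *
           \sum_(1 <= q < s | ~~ Av (i s) s q) dual_norm N (g q))
     <= U t) ->
  0 < r -> X p -> (h p <= (r ^+ 2)%:E)%E ->
  (* DDA iterates with eta_t = r / sqrt (U t), and revealed subgradients *)
  (forall t, (1 <= t <= T)%N ->
     X (x t) /\
     forall y, X y ->
       ((\sum_(1 <= s < t | Av (i t) t s) dotp (g s) (x t))%:E
          + ((r / Num.sqrt (U t))^-1)%:E * h (x t)
        <= (\sum_(1 <= s < t | Av (i t) t s) dotp (g s) y)%:E
          + ((r / Num.sqrt (U t))^-1)%:E * h y)%E) ->
  (forall t, (1 <= t <= T)%N -> subdiff (f t) (x t) (g t)) ->
  (\sum_(1 <= t < T.+1) f t (x t) - \sum_(1 <= t < T.+1) f t p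
     <= (2 * r * Num.sqrt (U T))%:E)%E.
Proof.
move=> N_norm _ X_convex _ h_sc h_lt _ h_ge0 _ _ f_dom _ _ U_gt0 U_homo U_lag r_gt0 Xp
  hp_le x_dda g_sub.
have h_fin y : X y -> h y \is a fin_num by move=> Xy; rewrite ge0_fin_numE ?h_lt.
have hE y : X y -> h y = (fine (h y))%:E by move=> Xy; rewrite fineK ?h_fin.
have p_dom t : (1 <= t <= T)%N -> dom_subdiff (f t) p by move=> tT; exact: f_dom.
apply: le_trans (sum_subgrad_le g_sub p_dom) _; rewrite lee_fin.
apply: (@dda_regret_sqrt_steps _ _ N X (fun y => fine (h y)) _ (fun t => Av (i t) t))
  => //; first exact: strongly_convex_on_fine.
- by move=> y Xy; exact: fine_ge0.
- by rewrite -lee_fin -hE.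
- move=> t tT; have [Xxt x_min] := x_dda t tT; split => // y Xy.
  by have := x_min y Xy; rewrite (hE _ Xxt) (hE _ Xy) -!EFinM -!EFinD lee_fin.
Qed.
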